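(* For every $\gamma\in F(L)$ and $x_0\in\{x,y\}$, one has $\partial_{x_0}(\gamma)\in L$.
   Context: $A=\mathbb{R}\langle x,y\rangle$; $L\subset A$ is the free Lie algebra on $x,y$. $\operatorname{tr}$ is the projection $A\to A/\operatorname{span}\{ab-ba\}$. $F(L)$ is the quotient of $L\otimes L$ by the span of $a\otimes b-b\otimes a$ and $a\otimes[b,c]-[a,b]\otimes c$, regarded as a subspace of $A/\operatorname{span}\{ab-ba\}$ via $a\otimes b\mapsto\operatorname{tr}(ab)$ (an injective map). For $x_0\in\{x,y\}$, $\partial_{x_0}:A/\operatorname{span}\{ab-ba\}\to A$ is given on cyclic words by $\operatorname{tr}(a_1\cdots a_n)\mapsto\sum_{i:\,a_i=x_0}a_{i+1}\cdots a_n\,a_1\cdots a_{i-1}$ ($a_k\in\{x,y\}$), extended linearly; $\partial_{x_0}(\gamma)$ means this map applied to the image of $\gamma$. *)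

From Stdlib Require Import Reals List.
Import ListNotations.
Open Scope R_scope.

Definition letter := bool.
Definition word := list letter.
Definition lx : letter := false.
Definition ly : letter := true.

(* Elements of the (completed) free algebra: coefficient functions on words.
   Genuine elements of A = R<x,y> are those with finite support (isPoly). *)
Definition A := word -> R.

Definition sumk (n : nat) (f : nat -> R) : R :=
  fold_right (fun k acc => f k + acc) 0 (List.seq 0 n).

Definition isPoly (a : A) : Prop :=
  exists n : nat, forall w : word, (n <= length w)%nat -> a w = 0.

Definition zeroA : A := fun _ => 0.
Definition addA (a b : A) : A := fun w => a w + b w.
Definition scaleA (r : R) (a : A) : A := fun w => r * a w.
Definition subA (a b : A) : A := addA a (scaleA (-1) b).
Definition mulA (a b : A) : A :=
  fun w => sumk (S (length w)) (fun k => a (firstn k w) * b (skipn k w)).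
Definition genA (l : letter) : A :=
  fun w => if list_eq_dec Bool.bool_dec w [l] then 1 else 0.
Definition bracket (a b : A) : A := subA (mulA a b) (mulA b a).

(* L : the free Lie algebra on x, y = Lie subalgebra of A generated by x, y *)
Inductive inL : A -> Prop :=
  | L_gen (l : letter) : inL (genA l)
  | L_add (a b : A) : inL a -> inL b -> inL (addA a b)
  | L_scale (r : R) (a : A) : inL a -> inL (scaleA r a)
  | L_bracket (a b : A) : inL a -> inL b -> inL (bracket a b).

(* span{ab - ba : a,b in A} (kernel of tr : A -> A/span{ab-ba}) *)
Inductive inComm : A -> Prop :=
  | C_comm (a b : A) : isPoly a -> isPoly b -> inComm (bracket a b)
  | C_add (a b : A) : inComm a -> inComm b -> inComm (addA a b)
  | C_scale (r : R) (a : A) : inComm a -> inComm (scaleA r a).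

(* tr a = tr b *)
Definition tr_eq (a b : A) : Prop := inComm (subA a b).

(* span{ a b : a, b in L } in A; its image under tr is F(L) (image of
   a (x) b |-> tr(ab)) *)
Inductive inLL : A -> Prop :=
  | LL_mul (a b : A) : inL a -> inL b -> inLL (mulA a b)
  | LL_add (a b : A) : inLL a -> inLL b -> inLL (addA a b)
  | LL_scale (r : R) (a : A) : inLL a -> inLL (scaleA r a).

Definition trInFL (g : A) : Prop := exists h : A, inLL h /\ tr_eq g h.

(* cyclic derivative, on words:
   tr(a_1...a_n) |-> sum_{i : a_i = x0} a_{i+1}...a_n a_1...a_{i-1}. *)
Definition cycder (x0 : letter) (a : A) : A :=
  fun v => sumk (S (length v)) (fun k => a (skipn k v ++ x0 :: firstn k v)).

(** For a, m in A write [a ♯ m := Σ_{a = r x0 p} p m r] (cut a at an occurrence of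
    x0 and splice m in).  Cutting the cyclic word tr(ab) at an x0 lying in a or in b
    gives [∂(ab) = a ♯ b + b ♯ a]; in particular ∂ kills ab - ba, so ∂ factors
    through tr.  On the first argument, x0 ♯ m = m, y ♯ m = 0 for the other letter
    y, and [[p,q] ♯ m = p ♯ [q,m] - q ♯ [p,m]].  Hence induction on a Lie element a
    shows that a ♯ m lies in L whenever m does, so ∂ maps every tr(ab) with
    a, b in L into L. *)

From Stdlib Require Import Reals List Lra FunctionalExtensionality.
Import ListNotations.
Open Scope R_scope.

Fixpoint lsum {X : Type} (l : list X) (f : X -> R) : R :=
  match l with [] => 0 | x :: l' => f x + lsum l' f end.

Lemma sumk_lsum (n : nat) (f : nat -> R) : sumk n f = lsum (seq 0 n) f.
Proof.
  unfold sumk; induction (seq 0 n); simpl; [reflexivity | now rewrite IHl].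
Qed.

Lemma lsum_ext {X : Type} (l : list X) (f g : X -> R) :
  (forall x, f x = g x) -> lsum l f = lsum l g.
Proof. intros H; induction l; simpl; [reflexivity | now rewrite H, IHl]. Qed.

Lemma lsum_map {X Y : Type} (l : list X) (h : X -> Y) (f : Y -> R) :
  lsum (map h l) f = lsum l (fun x => f (h x)).
Proof. induction l; simpl; [reflexivity | now rewrite IHl]. Qed.

Lemma lsum_plus {X : Type} (l : list X) (f g : X -> R) :
  lsum l (fun x => f x + g x) = lsum l f + lsum l g.
Proof. induction l; simpl; [lra | rewrite IHl; lra]. Qed.

Lemma lsum_mult_l {X : Type} (l : list X) (r : R) (f : X -> R) :
  lsum l (fun x => r * f x) = r * lsum l f.
Proof. induction l; simpl; [lra | rewrite IHl; lra]. Qed.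

Lemma lsum_mult_r {X : Type} (l : list X) (r : R) (f : X -> R) :
  lsum l (fun x => f x * r) = lsum l f * r.
Proof. induction l; simpl; [lra | rewrite IHl; lra]. Qed.

Lemma lsum_zero {X : Type} (l : list X) (f : X -> R) :
  (forall x, f x = 0) -> lsum l f = 0.
Proof. intros H; induction l; simpl; [lra | rewrite H, IHl; lra]. Qed.

Lemma lsum_swap {X Y : Type} (l1 : list X) (l2 : list Y) (f : X -> Y -> R) :
  lsum l1 (fun x => lsum l2 (fun y => f x y)) = lsum l2 (fun y => lsum l1 (fun x => f x y)).
Proof.
  induction l1; simpl.
  - symmetry; now apply lsum_zero.
  - rewrite IHl1, <- lsum_plus; reflexivity.
Qed.

Fixpoint splits (v : word) : list (word * word) :=
  match v with
  | [] => [([], [])]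
  | c :: v' => ([], c :: v') :: map (fun st : word * word => (c :: fst st : word, snd st)) (splits v')
  end.

Lemma sumk_splits (v : word) (F : word -> word -> R) :
  sumk (S (length v)) (fun k => F (firstn k v) (skipn k v))
  = lsum (splits v) (fun st => F (fst st) (snd st)).
Proof.
  rewrite sumk_lsum; revert F; induction v as [|c v IH]; intros F; [reflexivity|].
  change (seq 0 (S (length (c :: v)))) with (0%nat :: seq 1 (S (length v))).
  rewrite <- seq_shift; simpl; rewrite !lsum_map.
  f_equal; exact (IH (fun s t => F (c :: s) t)).
Qed.

Lemma mulA_splits (a b : A) (w : word) :
  mulA a b w = lsum (splits w) (fun st => a (fst st) * b (snd st)).
Proof. exact (sumk_splits w (fun s t => a s * b t)). Qed.

Lemma cycder_splits (x0 : letter) (a : A) (v : word) :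
  cycder x0 a v = lsum (splits v) (fun st => a (snd st ++ x0 :: fst st)).
Proof. exact (sumk_splits v (fun s t => a (t ++ x0 :: s))). Qed.

(** Both sides sum [F p q r] over the factorisations v = p ++ q ++ r. *)
Lemma lsum_splits_assoc (v : word) (F : word -> word -> word -> R) :
  lsum (splits v) (fun st => lsum (splits (snd st)) (fun t => F (fst st) (fst t) (snd t)))
  = lsum (splits v) (fun st => lsum (splits (fst st)) (fun s => F (fst s) (snd s) (snd st))).
Proof.
  revert F; induction v as [|c v IH]; intros F; [reflexivity|].
  simpl; rewrite !lsum_map; simpl.
  rewrite (lsum_ext _ _ _ (fun st => f_equal _ (lsum_map _ _ _))), lsum_plus; simpl.
  pose proof (IH (fun s t1 t2 => F (c :: s) t1 t2)) as E; simpl in E.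
  rewrite E; ring.
Qed.

Lemma lsum_splits_app (x : word) (c : letter) (y : word) (G : word * word -> R) :
  lsum (splits (x ++ c :: y)) G
  = lsum (splits x) (fun st => G (fst st, snd st ++ c :: y))
    + lsum (splits y) (fun st => G (x ++ c :: fst st, snd st)).
Proof.
  revert G; induction x as [|d x IH]; intros G; simpl; rewrite !lsum_map.
  - unfold word; ring.
  - rewrite IH; simpl; unfold word; ring.
Qed.

Lemma lsum_splits_nil_l (v : word) (F : word -> word -> R) :
  (forall s t, s <> [] -> F s t = 0) ->
  lsum (splits v) (fun st => F (fst st) (snd st)) = F [] v.
Proof.
  intros H; destruct v as [|c v]; simpl; [ring|].
  rewrite lsum_map, lsum_zero; [ring|].
  intros st; apply H; discriminate.
Qed.

Lemma lsum_splits_nil_r (v : word) (F : word -> word -> R) :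
  (forall s t, t <> [] -> F s t = 0) ->
  lsum (splits v) (fun st => F (fst st) (snd st)) = F v [].
Proof.
  revert F; induction v as [|c v IH]; intros F H; simpl; [ring|].
  rewrite lsum_map, H by discriminate; simpl; unfold word in *.
  rewrite (IH (fun s t => F (c :: s) t)); [ring|].
  intros s t Ht; apply H; exact Ht.
Qed.

(** [cycder_ins x0 a m] is [a ♯ m = Σ_{a = r x0 p} p m r]: its coefficient at v
    sums [a (r ++ x0 :: p) * m q] over the factorisations v = p ++ q ++ r. *)
Definition cycder_ins (x0 : letter) (a m : A) : A :=
  fun v => lsum (splits v) (fun pu => lsum (splits (snd pu))
             (fun qr => a (snd qr ++ x0 :: fst pu) * m (fst qr))).

Lemma cycder_mulA (x0 : letter) (a b : A) :
  cycder x0 (mulA a b) = addA (cycder_ins x0 a b) (cycder_ins x0 b a).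
Proof.
  extensionality v; unfold addA, cycder_ins; rewrite cycder_splits.
  rewrite (lsum_splits_assoc v (fun p q r => a (r ++ x0 :: p) * b q)).
  rewrite <- lsum_plus; apply lsum_ext; intros st.
  rewrite mulA_splits, lsum_splits_app, Rplus_comm; simpl.
  f_equal; apply lsum_ext; intros; ring.
Qed.

Lemma cycder_ins_addA_l (x0 : letter) (a b m : A) :
  cycder_ins x0 (addA a b) m = addA (cycder_ins x0 a m) (cycder_ins x0 b m).
Proof.
  extensionality v; unfold cycder_ins, addA; rewrite <- lsum_plus.
  apply lsum_ext; intros; rewrite <- lsum_plus; apply lsum_ext; intros; ring.
Qed.

Lemma cycder_ins_scaleA_l (x0 : letter) (r : R) (a m : A) :
  cycder_ins x0 (scaleA r a) m = scaleA r (cycder_ins x0 a m).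
Proof.
  extensionality v; unfold cycder_ins, scaleA; rewrite <- lsum_mult_l.
  apply lsum_ext; intros; rewrite <- lsum_mult_l; apply lsum_ext; intros; ring.
Qed.

Lemma cycder_ins_addA_r (x0 : letter) (a m n : A) :
  cycder_ins x0 a (addA m n) = addA (cycder_ins x0 a m) (cycder_ins x0 a n).
Proof.
  extensionality v; unfold cycder_ins, addA; rewrite <- lsum_plus.
  apply lsum_ext; intros; rewrite <- lsum_plus; apply lsum_ext; intros; ring.
Qed.

Lemma cycder_ins_scaleA_r (x0 : letter) (r : R) (a m : A) :
  cycder_ins x0 a (scaleA r m) = scaleA r (cycder_ins x0 a m).
Proof.
  extensionality v; unfold cycder_ins, scaleA; rewrite <- lsum_mult_l.
  apply lsum_ext; intros; rewrite <- lsum_mult_l; apply lsum_ext; intros; ring.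
Qed.

Lemma cycder_ins_mulA_r (x0 : letter) (a q m : A) (v : word) :
  cycder_ins x0 a (mulA q m) v =
  lsum (splits v) (fun s1 => lsum (splits (snd s1)) (fun s2 => lsum (splits (snd s2))
     (fun s3 => a (snd s3 ++ x0 :: fst s1) * (q (fst s2) * m (fst s3))))).
Proof.
  unfold cycder_ins; apply lsum_ext; intros s1.
  transitivity (lsum (splits (snd s1)) (fun st => lsum (splits (fst st))
                  (fun s => a (snd st ++ x0 :: fst s1) * (q (fst s) * m (snd s))))).
  - apply lsum_ext; intros s2; rewrite mulA_splits, <- lsum_mult_l; reflexivity.
  - symmetry.
    exact (lsum_splits_assoc (snd s1) (fun q1 q2 r => a (r ++ x0 :: fst s1) * (q q1 * m q2))).
Qed.

(** Cutting pq at an x0 in q contributes [q ♯ (m p)], at an x0 in p [p ♯ (q m)]. *)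
Lemma cycder_ins_mulA_l (x0 : letter) (p q m : A) :
  cycder_ins x0 (mulA p q) m = addA (cycder_ins x0 p (mulA q m)) (cycder_ins x0 q (mulA m p)).
Proof.
  extensionality v; unfold addA; rewrite !cycder_ins_mulA_r.
  transitivity (
    lsum (splits v) (fun s1 => lsum (splits (snd s1)) (fun s2 =>
      lsum (splits (snd s2)) (fun s3 => q (snd s3 ++ x0 :: fst s1) * (m (fst s2) * p (fst s3)))))
  + lsum (splits v) (fun s1 => lsum (splits (snd s1)) (fun s2 =>
      lsum (splits (fst s1)) (fun s3 => p (snd s2 ++ x0 :: fst s3) * q (snd s3) * m (fst s2))))).
  { unfold cycder_ins; rewrite <- lsum_plus; apply lsum_ext; intros s1.
    rewrite <- lsum_plus; apply lsum_ext; intros s2.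
    rewrite mulA_splits, lsum_splits_app, Rmult_plus_distr_r, <- !lsum_mult_r.
    f_equal; apply lsum_ext; intros; simpl; ring. }
  rewrite Rplus_comm; f_equal.
  rewrite (lsum_ext _ _ _ (fun s1 => lsum_swap (splits (snd s1)) (splits (fst s1)) _)).
  rewrite <- (lsum_splits_assoc v (fun a1 a2 u => lsum (splits u)
     (fun s2 => p (snd s2 ++ x0 :: a1) * q a2 * m (fst s2)))).
  do 3 (apply lsum_ext; intros); ring.
Qed.

Lemma cycder_ins_bracket_l (x0 : letter) (p q m : A) :
  cycder_ins x0 (bracket p q) m
  = subA (cycder_ins x0 p (bracket q m)) (cycder_ins x0 q (bracket p m)).
Proof.
  unfold bracket, subA.
  rewrite cycder_ins_addA_l, cycder_ins_scaleA_l, !cycder_ins_addA_r, !cycder_ins_scaleA_r,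
    !cycder_ins_mulA_l.
  extensionality v; unfold addA, scaleA; ring.
Qed.

Lemma genA_ne_cut (l x0 : letter) (r p : word) :
  r <> [] \/ p <> [] -> genA l (r ++ x0 :: p) = 0.
Proof.
  intros H; unfold genA.
  destruct (list_eq_dec Bool.bool_dec (r ++ x0 :: p) [l]) as [e|]; [|reflexivity].
  exfalso; destruct r as [|c r]; simpl in e; injection e; intros e' _.
  - destruct H; auto.
  - symmetry in e'; exact (app_cons_not_nil r p x0 e').
Qed.

Lemma cycder_ins_genA (x0 l : letter) (m : A) :
  cycder_ins x0 (genA l) m = scaleA (genA l [x0]) m.
Proof.
  extensionality v; unfold cycder_ins, scaleA.
  rewrite (lsum_splits_nil_l v (fun p u => lsum (splits u)
             (fun qr => genA l (snd qr ++ x0 :: p) * m (fst qr)))).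
  - rewrite (lsum_splits_nil_r v (fun q r => genA l (r ++ [x0]) * m q)); [reflexivity|].
    intros s t Ht; rewrite genA_ne_cut by auto; ring.
  - intros s t Hs; apply lsum_zero; intros; rewrite genA_ne_cut by auto; ring.
Qed.

Lemma cycder_ins_inL (x0 : letter) (a m : A) : inL a -> inL m -> inL (cycder_ins x0 a m).
Proof.
  intros Ha; revert m.
  induction Ha as [l|a b _ IHa _ IHb|r a _ IHa|a b Ha IHa Hb IHb]; intros m Hm.
  - rewrite cycder_ins_genA; apply L_scale, Hm.
  - rewrite cycder_ins_addA_l; apply L_add; auto.
  - rewrite cycder_ins_scaleA_l; apply L_scale; auto.
  - rewrite cycder_ins_bracket_l; apply L_add; [|apply L_scale];
      [apply IHa | apply IHb]; apply L_bracket; assumption.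
Qed.

Lemma cycder_addA (x0 : letter) (a b : A) :
  cycder x0 (addA a b) = addA (cycder x0 a) (cycder x0 b).
Proof.
  extensionality v; unfold addA; rewrite !cycder_splits, <- lsum_plus; reflexivity.
Qed.

Lemma cycder_scaleA (x0 : letter) (r : R) (a : A) :
  cycder x0 (scaleA r a) = scaleA r (cycder x0 a).
Proof.
  extensionality v; unfold scaleA; rewrite !cycder_splits, <- lsum_mult_l; reflexivity.
Qed.

Lemma cycder_bracket (x0 : letter) (a b : A) : cycder x0 (bracket a b) = zeroA.
Proof.
  unfold bracket, subA.
  rewrite cycder_addA, cycder_scaleA, !cycder_mulA.
  extensionality v; unfold addA, scaleA, zeroA; ring.
Qed.

Lemma cycder_inComm (x0 : letter) (c : A) : inComm c -> cycder x0 c = zeroA.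
Proof.
  induction 1 as [a b _ _|a b _ IHa _ IHb|r a _ IHa].
  - apply cycder_bracket.
  - rewrite cycder_addA, IHa, IHb; extensionality v; unfold addA, zeroA; ring.
  - rewrite cycder_scaleA, IHa; extensionality v; unfold scaleA, zeroA; ring.
Qed.

Lemma cycder_tr_eq (x0 : letter) (a b : A) : tr_eq a b -> cycder x0 a = cycder x0 b.
Proof.
  unfold tr_eq, subA; intros Hab.
  pose proof (cycder_inComm x0 _ Hab) as E.
  rewrite cycder_addA, cycder_scaleA in E.
  extensionality v; apply (f_equal (fun f => f v)) in E.
  unfold addA, scaleA, zeroA in E; lra.
Qed.

Lemma cycder_inLL (x0 : letter) (h : A) : inLL h -> inL (cycder x0 h).
Proof.
  induction 1 as [a b Ha Hb|a b _ IHa _ IHb|r a _ IHa].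
  - rewrite cycder_mulA; apply L_add; apply cycder_ins_inL; assumption.
  - rewrite cycder_addA; apply L_add; assumption.
  - rewrite cycder_scaleA; apply L_scale; assumption.
Qed.

Theorem mainTheorem5 :
  forall (x0 : letter) (g : A),
    isPoly g -> trInFL g -> inL (cycder x0 g).
Proof.
  intros x0 g _ [h [Hh Hgh]].
  rewrite (cycder_tr_eq x0 g h Hgh).
  exact (cycder_inLL x0 h Hh).
Qed.
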